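(* Let $K$ and $L$ be compact Hausdorff spaces and $\phi:K\to L$ a continuous surjection. If $K$ has the extension property and $L$ is scattered of finite height, then the Banach subalgebra $\phi^*C(L)=\{f\circ\phi: f\in C(L)\}$ of $C(K)$ is complemented in $C(K)$; equivalently, $\phi$ admits an averaging operator, i.e., a bounded linear operator $P:C(K)\to C(L)$ with $P(f\circ\phi)=f$ for all $f\in C(L)$.
   Context: $C(K)$ denotes the Banach space of real-valued continuous functions on $K$ with the supremum norm. For a closed set $F\subseteq K$, an extension operator for $F$ in $K$ is a bounded linear map $E:C(F)\to C(K)$ such that $E(f)|_F=f$ for all $f\in C(F)$. $K$ has the extension property if every nonempty closed subset of $K$ admits an extension operator in $K$. A scattered space $L$ has finite height if $L^{(n)}=\emptyset$ for some finite $n$, where $L^{(n)}$ denotes the $n$-th Cantor--Bendixson derivative (iterated set of non-isolated points). *)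

From HB Require Import structures.
From mathcomp Require Import all_boot all_order all_algebra.
From mathcomp Require Import all_classical all_reals all_analysis.
Set Implicit Arguments. Unset Strict Implicit. Unset Printing Implicit Defensive.
Import Order.TTheory GRing.Theory Num.Theory.
Import numFieldNormedType.Exports.
Local Open Scope classical_set_scope.
Local Open Scope ring_scope.

(* Elements of C(F), for F a subset of K, are represented by functions
   f : K -> R whose restriction to F is continuous (w.r.t. the subspace
   topology); operators defined on C(F) are required to depend only on
   the values on F.  The sup norm ||f||_F <= c is written
   (forall y, F y -> `|f y| <= c). *)

Definition CF {R : realType} {K : topologicalType} (F : set K) (f : K -> R) :=
  {within F, continuous f}.

Definition bounded_linear_op {R : realType} {K M : topologicalType}
  (F : set K) (G : set M) (E : (K -> R) -> (M -> R)) : Prop :=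
  [/\ (forall f g, CF F f -> (forall x, F x -> f x = g x) -> E f = E g),
      (forall f, CF F f -> CF G (E f)),
      (forall (a : R) f g, CF F f -> CF F g ->
          E (fun x => a * f x + g x) = (fun y => a * E f y + E g y)) &
      (exists C : R, forall f (c : R), CF F f ->
          (forall x, F x -> `|f x| <= c) ->
          forall y, G y -> `|E f y| <= C * c)].

Definition extension_operator {R : realType} {K : topologicalType}
  (F : set K) (E : (K -> R) -> (K -> R)) : Prop :=
  bounded_linear_op F setT E /\
  (forall f, CF F f -> forall x, F x -> E f x = f x).

Definition extension_property (R : realType) (K : topologicalType) : Prop :=
  forall F : set K, closed F -> F !=set0 ->
    exists E : (K -> R) -> (K -> R), extension_operator F E.

Definition isolated_in {K : topologicalType} (A : set K) (x : K) : Prop :=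
  A x /\ exists U, nbhs x U /\ U `&` A `<=` [set x].

Definition scattered (K : topologicalType) : Prop :=
  forall A : set K, A !=set0 -> exists x, isolated_in A x.

Definition CB_derivative {K : topologicalType} (A : set K) : set K :=
  [set x | A x /\ ~ isolated_in A x].

Definition CB_iter {K : topologicalType} (n : nat) : set K :=
  iter n (@CB_derivative K) setT.

Definition finite_height (K : topologicalType) : Prop :=
  exists n : nat, @CB_iter K n = set0.

(* Averaging operators are built downwards along the Cantor--Bendixson
   derivatives of L, from the empty set L^(n) to L^(0) = L.  Suppose P averages
   phi over a closed B and every point of A \ B is isolated in A.  With a
   section s of phi and an extension operator E for phi^-1(B), the function
   f - E f + E (P f o phi) is continuous and equals P f o phi on phi^-1(B); the
   averaging over A reads it off at s y for y in A \ B.  Continuity at points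
   of B holds because phi is a closed map, so fibres over points near y0 lie
   close to the fibre over y0. *)
From HB Require Import structures.
From mathcomp Require Import all_boot all_order all_algebra.
From mathcomp Require Import all_classical all_reals all_analysis.
From mathcomp Require Import ring lra.
Set Implicit Arguments. Unset Strict Implicit. Unset Printing Implicit Defensive.
Import Order.TTheory GRing.Theory Num.Theory.
Import numFieldNormedType.Exports.
Local Open Scope classical_set_scope.
Local Open Scope ring_scope.

Lemma CF_near (R : realType) (T : topologicalType) (A : set T) (f : T -> R)
    x (e : R) :
  CF A f -> A x -> 0 < e -> nbhs x (fun t => A t -> `|f x - f t| < e).
Proof.
move=> /subspace_continuousP /(_ x) cf Ax e0.
have := proj1 (cvgrPdist_lt _ _) (cf Ax) e e0.
by rewrite /= nearE /within /= => /(_ (within_filter _ _)); apply.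
Qed.

Lemma CF_add (R : realType) (T : topologicalType) (A : set T) (f g : T -> R) :
  CF A f -> CF A g -> CF A (fun x => f x + g x).
Proof.
move=> /subspace_continuousP cf /subspace_continuousP cg.
by apply/subspace_continuousP => x Ax; apply: cvgD; [exact: cf | exact: cg].
Qed.

Lemma CF_sub (R : realType) (T : topologicalType) (A : set T) (f g : T -> R) :
  CF A f -> CF A g -> CF A (fun x => f x - g x).
Proof.
move=> /subspace_continuousP cf /subspace_continuousP cg.
by apply/subspace_continuousP => x Ax; apply: cvgB; [exact: cf | exact: cg].
Qed.

Lemma CF_comp (R : realType) (T U : topologicalType) (A : set T) (B : set U)
    (phi : T -> U) (g : U -> R) :
  continuous phi -> (forall x, A x -> B (phi x)) -> CF B g -> CF A (g \o phi).
Proof.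
move=> cphi AB /subspace_continuousP cg.
apply/subspace_continuousP => x Ax.
apply: (cvg_comp _ _ _ (cg _ (AB _ Ax))) => W /= /cphi.
rewrite /= nbhs_simpl /=.
by apply: filterS => t /= Wt At; exact: Wt (AB _ At).
Qed.

Lemma closed_CB_derivative (T : topologicalType) (A : set T) :
  closed A -> closed (CB_derivative A).
Proof.
move=> cA; rewrite -openC openE => z /=.
have [Az|nAz] := pselect (A z); last first.
  move=> _; have : nbhs z (~` A) by apply: open_nbhs_nbhs; split; rewrite ?openC.
  by apply: filterS => t nAt [].
move=> notderiv; have [_ [U [nU UA]]] : isolated_in A z.
  by apply: contrapT => niso; apply: notderiv.
apply: filterS (nbhs_interior nU) => t Ut [At nit]; apply: nit; split => //.
have tz : t = z by apply: UA; split => //; exact: interior_subset.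
by subst t; exists U.
Qed.

Lemma closed_CB_iter (T : topologicalType) k : closed (@CB_iter T k).
Proof.
elim: k => [|k IH]; first exact: closedT.
by rewrite /CB_iter iterS; exact: closed_CB_derivative.
Qed.

(* phi is a closed map, as K is compact and L Hausdorff. *)
Lemma nbhs_fibre_sub (K L : topologicalType) (phi : K -> L) (W : set K) y0 :
  compact [set: K] -> hausdorff_space L -> continuous phi ->
  open W -> (forall x, phi x = y0 -> W x) ->
  nbhs y0 (fun y => forall x, phi x = y -> W x).
Proof.
move=> cK hL cphi oW fW.
have cWC : compact (~` W).
  by apply: (subclosed_compact _ cK) => //; rewrite closedC.
have clI : closed (phi @` (~` W)).
  by apply/(compact_closed hL)/continuous_compact => //;
     exact: continuous_subspaceT.
have : nbhs y0 (~` (phi @` (~` W))).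
  by apply: open_nbhs_nbhs; split; [rewrite openC | move=> [x /[swap] /fW]].
by apply: filterS => y nI x pxy; apply: contrapT => nWx; apply: nI; exists x.
Qed.

Lemma extension_operator_closed (R : realType) (K : topologicalType)
    (F : set K) :
  extension_property R K -> closed F ->
  exists E : (K -> R) -> (K -> R), extension_operator F E.
Proof.
move=> eK cF; have [->|/set0P F0] := eqVneq F set0; last exact: eK.
exists (fun _ _ => 0); split=> //; split=> //.
- by move=> f _; apply: continuous_subspaceT; exact: cst_continuous.
- by move=> a f g _ _; apply: funext => y; rewrite mulr0 addr0.
- by exists 0 => f c _ _ y _; rewrite normr0 mul0r.
Qed.

Section Averaging.
Variables (R : realType) (K L : topologicalType) (phi : K -> L).

Definition averaging_op (A : set L) (P : (K -> R) -> (L -> R)) :=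
  bounded_linear_op (phi @^-1` A) A P /\
  (forall g, CF A g -> forall y, A y -> P (g \o phi) y = g y).

Lemma averaging_op_set0 : exists P, averaging_op set0 P.
Proof.
exists (fun _ _ => 0); split; [split|] => //.
- by move=> f _; exact: continuous_subspace0.
- by move=> a f g _ _; apply: funext => y; rewrite mulr0 addr0.
- by exists 0 => f c _ _ y [].
Qed.

Hypotheses (cK : compact [set: K]) (hL : hausdorff_space L)
  (cphi : continuous phi).
Variable s : L -> K.
Hypothesis phiK : cancel s phi.

Section Lift.
Variables (A B : set L) (P : (K -> R) -> (L -> R)) (E : (K -> R) -> (K -> R)).
Hypotheses (BA : B `<=` A) (avP : averaging_op B P)
  (extE : extension_operator (phi @^-1` B) E).

Let CF_preimage {f : K -> R} : CF (phi @^-1` A) f -> CF (phi @^-1` B) f.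
Proof. by apply: continuous_subspaceW => x /BA. Qed.

Let CF_avg_comp {f : K -> R} : CF (phi @^-1` A) f -> CF (phi @^-1` B) (P f \o phi).
Proof.
move=> /CF_preimage cf; have [[_ Pcont _ _] _] := avP.
by apply: (CF_comp cphi _ (Pcont f cf)) => x.
Qed.

Definition patch f x := f x - E f x + E (P f \o phi) x.

Lemma patch_preimage f x :
  CF (phi @^-1` A) f -> B (phi x) -> patch f x = P f (phi x).
Proof.
move=> cf Bx; have [_ Eid] := extE.
by rewrite /patch (Eid _ (CF_avg_comp cf)) // (Eid _ (CF_preimage cf)) // subrr add0r.
Qed.

Lemma CF_patch f : CF (phi @^-1` A) f -> CF (phi @^-1` A) (patch f).
Proof.
move=> cf; have [[_ Econt _ _] _] := extE.
have EA g : CF (phi @^-1` B) g -> CF (phi @^-1` A) (E g).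
  by move=> /Econt; apply: continuous_subspaceW.
apply: CF_add; last exact/EA/CF_avg_comp.
by apply: CF_sub => //; exact/EA/CF_preimage.
Qed.

Lemma patch_lin a f g : CF (phi @^-1` A) f -> CF (phi @^-1` A) g ->
  patch (fun x => a * f x + g x) = (fun x => a * patch f x + patch g x).
Proof.
move=> cf cg; have [[_ _ Plin _] _] := avP; have [[_ _ Elin _] _] := extE.
have Pfg := Plin a f g (CF_preimage cf) (CF_preimage cg).
apply: funext => x.
rewrite /patch (Elin a f g (CF_preimage cf) (CF_preimage cg)) [P _]Pfg.
by rewrite (Elin a _ _ (CF_avg_comp cf) (CF_avg_comp cg)); ring.
Qed.

Lemma patch_comp g : CF A g -> patch (g \o phi) = g \o phi.
Proof.
move=> cg; have [[_ _ _ _] Pid] := avP; have [[Eloc _ _ _] _] := extE.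
have cgphi : CF (phi @^-1` A) (g \o phi).
  by apply: (CF_comp cphi _ cg) => x.
rewrite /patch (Eloc (P (g \o phi) \o phi) (g \o phi) (CF_avg_comp cgphi)).
  by apply: funext => x; rewrite subrK.
by move=> x Bx /=; apply: Pid => //; exact: continuous_subspaceW cg.
Qed.

Lemma patch_bounded : exists M : R, forall f c, CF (phi @^-1` A) f ->
  (forall x, (phi @^-1` A) x -> `|f x| <= c) ->
  forall x, (phi @^-1` A) x -> `|patch f x| <= M * c.
Proof.
have [[_ _ _ [C Pbd]] _] := avP; have [[_ _ _ [CE Ebd]] _] := extE.
exists (1 + CE + CE * C) => f c cf fc x Ax.
have fcB x' : (phi @^-1` B) x' -> `|f x'| <= c by move=> /BA; exact: fc.
have fx_le := fc x Ax.
have Efx_le := Ebd f c (CF_preimage cf) fcB x I.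
have EPfx_le := Ebd (P f \o phi) (C * c) (CF_avg_comp cf)
  (fun x' Bx' => Pbd f c (CF_preimage cf) fcB (phi x') Bx') x I.
have := ler_normD (f x - E f x) (E (P f \o phi) x).
have := ler_normB (f x) (E f x).
rewrite /patch; nra.
Qed.

Definition avg_lift f y :=
  if y \in B then P f y else if y \in A then patch f (s y) else 0.

Lemma avg_lift_local f g : CF (phi @^-1` A) f ->
  (forall x, (phi @^-1` A) x -> f x = g x) -> avg_lift f = avg_lift g.
Proof.
move=> cf fg; have [[Ploc _ _ _] _] := avP; have [[Eloc _ _ _] _] := extE.
have fgB x : (phi @^-1` B) x -> f x = g x by move=> /BA; exact: fg.
have Pfg : P f = P g by apply: Ploc => //; exact: CF_preimage.
apply: funext => y; rewrite /avg_lift /patch Pfg.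
case: ifP => // _; case: ifPn => // /set_mem Ay.
rewrite (Eloc f g (CF_preimage cf) fgB) fg //.
by rewrite /preimage /= phiK.
Qed.

Lemma avg_lift_lin a f g : CF (phi @^-1` A) f -> CF (phi @^-1` A) g ->
  avg_lift (fun x => a * f x + g x) = (fun y => a * avg_lift f y + avg_lift g y).
Proof.
move=> cf cg; have [[_ _ Plin _] _] := avP.
apply: funext => y.
rewrite /avg_lift patch_lin // (Plin a f g (CF_preimage cf) (CF_preimage cg)).
by case: ifP => // _; case: ifP => // _; rewrite mulr0 addr0.
Qed.

Hypothesis isoA : forall y, A y -> ~ B y -> isolated_in A y.

Lemma CF_avg_lift f : CF (phi @^-1` A) f -> CF A (avg_lift f).
Proof.
move=> cf; have [[_ Pcont _ _] _] := avP.
apply/subspace_continuousP => y0 Ay0; apply/cvgrPdist_lt => e e0.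
rewrite near_withinE.
change (nbhs y0 (fun t => A t -> `|avg_lift f y0 - avg_lift f t| < e)).
have [By0|nBy0] := pselect (B y0); last first.
  have [_ [U [nU UA]]] := isoA Ay0 nBy0.
  by apply: filterS nU => t Ut At; rewrite -(UA t) ?subrr ?normr0.
pose W x := (phi @^-1` A) x -> `|P f y0 - patch f x| < e.
have fibreW x : phi x = y0 -> W° x.
  move=> px; have Bx : B (phi x) by rewrite px.
  rewrite /W -px -(patch_preimage cf Bx).
  exact: CF_near (CF_patch cf) (BA Bx) e0.
have near_B := CF_near (Pcont f (CF_preimage cf)) By0 e0.
have near_fibre := nbhs_fibre_sub cK hL cphi (@open_interior _ W) fibreW.
apply: filterS (filterI near_B near_fibre) => t [PB tW] At.
rewrite /avg_lift (mem_set By0) (mem_set At).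
case: ifPn => [/set_mem /PB //|_].
by apply: (interior_subset (tW _ (phiK t))); rewrite /preimage /= phiK.
Qed.

Lemma avg_lift_bounded : exists M : R, forall f c, CF (phi @^-1` A) f ->
  (forall x, (phi @^-1` A) x -> `|f x| <= c) ->
  forall y, A y -> `|avg_lift f y| <= M * c.
Proof.
have [[_ _ _ [C Pbd]] _] := avP; have [M patch_bd] := patch_bounded.
exists (Num.max C M) => f c cf fc y Ay.
have sA : (phi @^-1` A) (s y) by rewrite /preimage /= phiK.
have c0 : 0 <= c by apply: le_trans (normr_ge0 _) (fc _ sA).
rewrite /avg_lift; case: ifPn => [/set_mem By|_].
  apply: le_trans (Pbd f c _ _ y By) _; first exact: CF_preimage.
    by move=> x /BA; exact: fc.
  by apply: ler_wpM2r => //; rewrite le_max lexx.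
rewrite (mem_set Ay); apply: le_trans (patch_bd f c cf fc _ sA) _.
by apply: ler_wpM2r => //; rewrite le_max lexx orbT.
Qed.

Lemma avg_lift_comp g : CF A g -> forall y, A y -> avg_lift (g \o phi) y = g y.
Proof.
move=> cg y Ay; have [_ Pid] := avP.
rewrite /avg_lift patch_comp // (mem_set Ay) /= phiK.
by case: ifPn => // /set_mem; apply: Pid; exact: continuous_subspaceW cg.
Qed.

Lemma averaging_op_lift : averaging_op A avg_lift.
Proof.
split; last exact: avg_lift_comp.
split; [exact: avg_lift_local | exact: CF_avg_lift | exact: avg_lift_lin |].
exact: avg_lift_bounded.
Qed.

End Lift.

Hypothesis eK : extension_property R K.

Lemma averaging_op_CB_iterS k :
  (exists P, averaging_op (CB_iter k.+1) P) -> exists P, averaging_op (CB_iter k) P.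
Proof.
move=> [P avP].
have clB : closed (phi @^-1` CB_iter k.+1).
  by apply: preimage_closed; [move=> x _; apply: cphi | exact: closed_CB_iter].
have [E extE] := extension_operator_closed eK clB.
exists (avg_lift (CB_iter k) (CB_iter k.+1) P E).
apply: averaging_op_lift => //; first by rewrite /CB_iter iterS => y [].
move=> y Ay nBy; apply: contrapT => niso; apply: nBy.
by rewrite /CB_iter iterS.
Qed.

Lemma averaging_op_CB_iter m k :
  @CB_iter L (k + m) = set0 -> exists P, averaging_op (CB_iter k) P.
Proof.
elim: m k => [|m IH] k Lkm.
  by move: Lkm; rewrite addn0 => ->; exact: averaging_op_set0.
by apply: averaging_op_CB_iterS; apply: IH; rewrite addSnnS.
Qed.

End Averaging.

Theorem corollary2p5 (R : realType) (K L : topologicalType)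
  (phi : K -> L) :
  compact [set: K] -> hausdorff_space K ->
  compact [set: L] -> hausdorff_space L ->
  continuous phi -> (forall y : L, exists x : K, phi x = y) ->
  extension_property R K -> scattered L -> finite_height L ->
  (* phi^* C(L) is complemented in C(K) *)
  (exists Q : (K -> R) -> (K -> R),
      bounded_linear_op setT setT Q /\
      (forall h, CF setT h ->
         exists g : L -> R, CF setT g /\ Q h = g \o phi) /\
      (forall g : L -> R, CF setT g -> Q (g \o phi) = g \o phi)) /\
  (* phi admits an averaging operator *)
  (exists P : (K -> R) -> (L -> R),
      bounded_linear_op setT setT P /\
      (forall f : L -> R, CF setT f -> P (f \o phi) = f)).
Proof.
move=> cK _ _ hL cphi surj eK _ [n Ln].
have [s phiK] : exists s : L -> K, cancel s phi.
  by exists (fun y => projT1 (cid (surj y))) => y; exact: projT2 (cid (surj y)).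
have [P [[Ploc Pcont Plin [C Pbd]] Pid]] :=
  averaging_op_CB_iter cK hL cphi phiK eK (k := 0%N) (m := n) Ln.
split.
- exists (fun h => P h \o phi); split; [split | split].
  + by move=> f g cf fg; rewrite (Ploc f g).
  + by move=> f cf; apply: (CF_comp cphi _ (Pcont f cf)).
  + by move=> a f g cf cg; rewrite (Plin a f g).
  + by exists C => f c cf fc x _; exact: Pbd.
  + by move=> h ch; exists (P h); split; [exact: Pcont |].
  + by move=> g cg; apply: funext => x; exact: Pid.
- exists P; split; first by split => //; exists C.
  by move=> f cf; apply: funext => y; exact: Pid.
Qed.
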